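(* Let $k$ be a field and $n\ge2$. Put $A_0=I_n$, $A_i=x^i$ for $1\le i\le n-1$, $B_i=\sum_{j=1}^{n-i-1}jE_{j+1,i+j+1}$ for $0\le i\le n-2$, and $C=\sum_{j=1}^{n-1}jE_{j+1,j}$. Then $$N(\mathrm{J}_n(k))=\begin{cases}\bigoplus_{i=0}^{n-1}kA_i\oplus\bigoplus_{i=0}^{n-2}kB_i & (\mathrm{ch}(k)\nmid n),\\ \bigoplus_{i=0}^{n-1}kA_i\oplus\bigoplus_{i=0}^{n-2}kB_i\oplus kC & (\mathrm{ch}(k)\mid n).\end{cases}$$ In particular $\dim_kN(\mathrm{J}_n(k))=2n-1$ if $\mathrm{ch}(k)\nmid n$ and $2n$ if $\mathrm{ch}(k)\mid n$.
   Context: $x=E_{12}+E_{23}+\cdots+E_{n-1,n}\in\mathrm{M}_n(k)$, where $E_{ij}$ are matrix units, and $\mathrm{J}_n(k)$ is the $k$-subalgebra generated by $x$. For a subalgebra $A\subseteq\mathrm{M}_n(k)$, $N(A)=\{z\in\mathrm{M}_n(k)\mid zy-yz\in A\text{ for all }y\in A\}$. *)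

From HB Require Import structures.
From mathcomp Require Import all_boot all_order all_algebra.
Set Implicit Arguments. Unset Strict Implicit. Unset Printing Implicit Defensive.
Import GRing.Theory.
Local Open Scope ring_scope.

(* Matrices are indexed 0-based: the 1-based matrix unit E_{a,b} is the
   entry (a-1, b-1). *)

Definition xJ (k : fieldType) (n : nat) : 'M[k]_n :=
  \matrix_(r < n, c < n) ((r.+1 == c :> nat)%:R).

Definition inJ (k : fieldType) (n : nat) (y : 'M[k]_n) : Prop :=
  exists p : {poly k}, y = \sum_(i < size p) p`_i *: (xJ k n) ^+ i.

Definition normalizer (k : fieldType) (n : nat) (A : 'M[k]_n -> Prop)
  (z : 'M[k]_n) : Prop :=
  forall y, A y -> A (z * y - y * z).

Definition Amx (k : fieldType) (n i : nat) : 'M[k]_n := (xJ k n) ^+ i.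

(* B_i = sum_{j=1}^{n-i-1} j E_{j+1,i+j+1}; 0-based: entry (j, i+j) = j *)
Definition Bmx (k : fieldType) (n i : nat) : 'M[k]_n :=
  \matrix_(r < n, c < n) (if (1 <= r)%N && (c == i + r :> nat) then (r : nat)%:R else 0).

(* C = sum_{j=1}^{n-1} j E_{j+1,j}; 0-based: entry (j, j-1) = j *)
Definition Cmx (k : fieldType) (n : nat) : 'M[k]_n :=
  \matrix_(r < n, c < n) (if (r == c.+1 :> nat) then (r : nat)%:R else 0).

Definition char_dvd (k : fieldType) (n : nat) : Prop :=
  exists2 p : nat, p \in [pchar k] & (p %| n)%N.

Definition Nfamily (k : fieldType) (n : nat) (b : bool) : seq 'M[k]_n :=
  [seq Amx k n i | i <- iota 0 n] ++ [seq Bmx k n i | i <- iota 0 (n - 1)]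
  ++ (if b then [:: Cmx k n] else [::]).

From HB Require Import structures.
From mathcomp Require Import all_boot all_order all_algebra.
From mathcomp Require Import zify.
Import GRing.Theory.
Local Open Scope ring_scope.

(* Write ad z = z x - x z.  Since J is spanned by the powers of x and
   [z, x^(i+1)] = [z, x^i] x + x^i [z, x], a matrix z normalizes J exactly
   when ad z lies in J; moreover the centralizer of x is J itself.  With
   D = diag(0, 1, ..., n-1) one has B_i = D x^i and ad D = -x, hence
   ad B_i = -x^(i+1), while ad C = -1 as soon as n = 0 in k.  So if
   ad z = sum_i c_i x^i, the correction S = sum_i c_(i+1) B_i gives
   ad (z + S) = c_0 1.  Taking traces (a commutator has trace 0) yields
   n c_0 = 0: if n <> 0 in k then c_0 = 0 and z + S is in J, otherwise
   z + S + c_0 C is in J.  Conversely ad maps every A_i, B_i (and C when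
   n = 0 in k) into J.  Finally, reading off the entries in rows 0 and 1 of
   a vanishing linear combination shows that the family is free, which gives
   the dimension. *)

Lemma span_linear_into {K : fieldType} {vT wT : vectType K}
    (f : {linear vT -> wT}) (s : seq vT) (U : {vspace wT}) :
  {in s, forall v, f v \in U} -> forall v, v \in <<s>>%VS -> f v \in U.
Proof.
move=> fsU v sv; rewrite -lfunE memv_preim; apply: subvP sv.
by apply/span_subvP => u su; rewrite -memv_preim lfunE fsU.
Qed.

Lemma free_nat_coefs {K : fieldType} {vT : vectType K} (s : seq vT) :
  (forall g : nat -> K, \sum_(i < size s) g i *: s`_i = 0 ->
     forall i, (i < size s)%N -> g i = 0) ->
  free s.
Proof.
move=> coefs0; apply/(freeP (X := in_tuple s)) => g sum0 i.
pose gn j := oapp g 0 (insub j).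
have gnE (j : 'I_(size s)) : gn j = g j by rewrite /gn valK.
rewrite -gnE; apply: coefs0 (ltn_ord i); rewrite -{}[RHS]sum0.
by apply: eq_bigr => j _; rewrite gnE.
Qed.

Lemma sum_nth_cat {R : pzRingType} {V : lmodType R} (s1 s2 : seq V) (g : nat -> R) :
  \sum_(i < size (s1 ++ s2)) g i *: (s1 ++ s2)`_i =
  \sum_(i < size s1) g i *: s1`_i + \sum_(i < size s2) g (size s1 + i)%N *: s2`_i.
Proof.
rewrite -(big_mkord xpredT (fun i => g i *: (s1 ++ s2)`_i)) size_cat.
rewrite big_mkord big_split_ord /=; congr (_ + _); apply: eq_bigr => i _.
  by rewrite nth_cat ltn_ord.
by rewrite nth_cat ltnNge leq_addr /= addKn.
Qed.

Lemma char_dvdE (k : fieldType) (n : nat) :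
  (0 < n)%N -> char_dvd k n <-> n%:R = 0 :> k.
Proof.
move=> n_gt0; split=> [[p charp dvd_pn]|/eqP n0].
  by apply/eqP; rewrite -(dvdn_pcharf charp).
by have [p charp] := natf0_pchar n_gt0 n0; exists p; rewrite // (dvdn_pcharf charp).
Qed.

Section JordanNormalizer.

Variables (k : fieldType) (m : nat).
Local Notation n := m.+1.
Local Notation x := (xJ k n).

Lemma xJE (r c : 'I_n) : x r c = (r.+1 == c :> nat)%:R.
Proof. by rewrite mxE. Qed.

Lemma mulxE (M : 'M[k]_n) r (c : 'I_n) :
  (M * x) r c = if (0 < c)%N then M r (inord c.-1) else 0.
Proof.
rewrite -mulmxE mxE (eq_bigr (fun t : 'I_n =>
  if (0 < c)%N && (t == c.-1 :> nat) then M r (inord t) else 0)); last first.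
  move=> t _; rewrite xJE inord_val.
  by case: c => [[|c] ?] /=; rewrite ?mulr0 // eqSS; case: eqP; rewrite ?mulr1 ?mulr0.
by rewrite -big_mkcond (big_ord1_cond_eq _ (fun t => M r (inord t)) (fun=> (0 < c)%N))
  andbC (leq_ltn_trans (leq_pred c) (ltn_ord c)) andbT.
Qed.

Lemma xmulE (M : 'M[k]_n) (r : 'I_n) c :
  (x * M) r c = if (r.+1 < n)%N then M (inord r.+1) c else 0.
Proof.
rewrite -mulmxE mxE (eq_bigr (fun t : 'I_n =>
  if t == r.+1 :> nat then M (inord t) c else 0)); last first.
  by move=> t _; rewrite xJE inord_val eq_sym; case: eqP; rewrite ?mul1r ?mul0r.
by rewrite -big_mkcond (big_ord1_eq _ (fun t => M (inord t) c)).
Qed.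

Lemma xpowE j (r c : 'I_n) : (x ^+ j) r c = (c == r + j :> nat)%N%:R.
Proof.
elim: j c => [|j IHj] c; first by rewrite expr0 mxE addn0 eq_sym.
rewrite exprSr mulxE; case: posnP => [->|c_gt0]; first by rewrite addnS.
rewrite IHj inordK; last by have := ltn_ord c; lia.
by rewrite (_ : (c.-1 == r + j)%N = (c == r + j.+1 :> nat)%N) //; apply/eqP/eqP; lia.
Qed.

Lemma psumE M (f : nat -> k) (r c : 'I_n) :
  (\sum_(i < M) f i *: x ^+ i) r c =
  if (r <= c)%N && (c - r < M)%N then f (c - r)%N else 0.
Proof.
rewrite summxE (eq_bigr (fun i : 'I_M =>
  if (r <= c)%N && (i == c - r :> nat)%N then f i else 0)); last first.
  move=> i _; rewrite mxE xpowE; case: leqP => rc /=.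
    have -> : (c == r + i :> nat)%N = (i == c - r :> nat)%N by apply/eqP/eqP; lia.
    by case: eqP; rewrite ?mulr1 ?mulr0.
  by rewrite (_ : (c == r + i :> nat)%N = false) ?mulr0 //; apply/negbTE/eqP; lia.
by rewrite -big_mkcond (big_ord1_cond_eq _ f (fun=> (r <= c)%N)) andbC.
Qed.

Definition Aseq : seq 'M[k]_n := [seq Amx k n i | i <- iota 0 n].
Definition Jspace : {vspace 'M[k]_n} := <<Aseq>>%VS.

Lemma Aseq_tuple : Aseq = [tuple x ^+ i | i < n] :> seq _.
Proof. by rewrite /Aseq -val_enum_ord -map_comp /mktuple /= enumT unlock. Qed.

(* Every power of x lies in J (those of exponent >= n vanish). *)
Lemma xpow_in j : x ^+ j \in Jspace.
Proof.
case: (ltnP j n) => [lt_jn | le_nj].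
  by apply: memv_span; apply/mapP; exists j; rewrite ?mem_iota.
suff -> : x ^+ j = 0 by apply: mem0v.
by apply/matrixP => r c; rewrite xpowE mxE; case: eqP => //; have := ltn_ord c; lia.
Qed.

Lemma Jspace_coord y :
  y \in Jspace -> exists c : 'I_n -> k, y = \sum_(i < n) c i *: x ^+ i.
Proof.
rewrite /Jspace Aseq_tuple => /coord_span ->; eexists; apply: eq_bigr => i _.
by rewrite -tnth_nth tnth_mktuple.
Qed.

Lemma inJ_Jspace y : inJ y <-> y \in Jspace.
Proof.
split=> [[p ->] | /Jspace_coord [c ->]].
  by apply: memv_suml => i _; apply/memvZ/xpow_in.
pose p := \poly_(i < n) c (inord i); exists p.
rewrite (big_ord_widen n (fun i => p`_i *: x ^+ i) (size_poly _ _)) [RHS]big_mkcond.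
apply: eq_bigr => i _; rewrite coef_poly ltn_ord inord_val.
case: ltnP => // le_p_i; have := nth_default 0 le_p_i.
by rewrite coef_poly ltn_ord inord_val => ->; rewrite scale0r.
Qed.

Lemma Jspace_mulxpow i {y} :
  y \in Jspace -> (y * x ^+ i \in Jspace) /\ (x ^+ i * y \in Jspace).
Proof.
move=> /Jspace_coord [c ->]; rewrite mulr_suml mulr_sumr.
by split; apply: memv_suml => j _;
  [rewrite -scalerAl | rewrite -scalerAr]; rewrite -exprD; apply/memvZ/xpow_in.
Qed.

Definition commr (a z : 'M[k]_n) : 'M[k]_n := z * a - a * z.

Fact commr_is_linear a : linear (commr a).
Proof.
by move=> c u v; rewrite /commr mulrDl mulrDr opprD addrACA -scalerAl -scalerAr -scalerBr.
Qed.

HB.instance Definition _ a :=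
  GRing.isLinear.Build k 'M[k]_n 'M[k]_n *:%R (commr a) (commr_is_linear a).

Local Notation adx := (commr x).

Lemma commrE a z r c : commr a z r c = (z * a) r c - (a * z) r c.
Proof. by rewrite /commr !mxE. Qed.

Lemma commr_trace a z : \tr (commr a z) = 0.
Proof. by rewrite /commr raddfB /= -!mulmxE mxtrace_mulC subrr. Qed.

Lemma adx_xpow i : adx (x ^+ i) = 0.
Proof. by rewrite /commr -exprSr -exprS subrr. Qed.

(* Leibniz rule: if ad z is in J then so is [z, x^i] for every i. *)
Lemma commr_xpow_in z i : adx z \in Jspace -> commr (x ^+ i) z \in Jspace.
Proof.
move=> adz; elim: i => [|i IHi]; first by rewrite /commr expr0 mulr1 mul1r subrr mem0v.
have -> : commr (x ^+ i.+1) z = commr (x ^+ i) z * x ^+ 1 + x ^+ i * adx z.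
  by rewrite /commr expr1 exprSr mulrBl mulrBr !mulrA addrA subrK.
by apply: memvD; [case: (Jspace_mulxpow 1 IHi) | case: (Jspace_mulxpow i adz)].
Qed.

Lemma normalizer_adx z : normalizer (@inJ k n) z <-> adx z \in Jspace.
Proof.
split=> [Nz | adz y /inJ_Jspace /Jspace_coord [c ->]].
  by apply/inJ_Jspace; apply: Nz; apply/inJ_Jspace; rewrite -[x]expr1 xpow_in.
apply/inJ_Jspace; rewrite mulr_sumr mulr_suml -sumrB; apply: memv_suml => i _.
by rewrite -scalerAr -scalerAl -scalerBr; apply/memvZ/commr_xpow_in.
Qed.

(* The centralizer of x is J: a matrix commuting with x is determined by
   its first row, row by row, and is the Toeplitz matrix of that row. *)
Lemma centralizer_x w : adx w = 0 -> w \in Jspace.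
Proof.
move=> /eqP; rewrite subr_eq0 => /eqP wx_xw.
have wE r : (r < n)%N -> forall c : 'I_n,
    w (inord r) c = if (r <= c)%N then w ord0 (inord (c - r)) else 0.
  elim: r => [|r IHr] lt_rn c.
    have -> : inord 0 = ord0 :> 'I_n by apply: val_inj; rewrite /= inordK.
    by rewrite subn0 inord_val.
  have := congr1 (fun M : 'M[k]_n => M (inord r) c) wx_xw.
  rewrite mulxE xmulE inordK ?(ltnW lt_rn) // lt_rn => <-.
  case: posnP => [-> //|c_gt0].
  rewrite IHr ?(ltnW lt_rn) // inordK; last by have := ltn_ord c; lia.
  by rewrite -[in RHS](prednK c_gt0) ltnS subSS.
suff -> : w = \sum_(i < n) w ord0 (inord i) *: x ^+ i.
  by apply: memv_suml => i _; apply/memvZ/xpow_in.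
apply/matrixP => r c; rewrite (psumE _ (fun j => w ord0 (inord j))).
have := wE r (ltn_ord r) c; rewrite inord_val => ->.
by rewrite (_ : c - r < n)%N ?andbT //; have := ltn_ord c; lia.
Qed.

Definition Dmx : 'M[k]_n := diag_mx (\row_(j < n) (j : nat)%:R).

Lemma Bmx_diag i : Bmx k n i = Dmx * x ^+ i.
Proof.
apply/matrixP => r c; rewrite -mulmxE mul_diag_mx !mxE xpowE addnC.
by case: posnP => [-> /=|_]; rewrite ?mul0r //=; case: eqP; rewrite ?mulr1 ?mulr0.
Qed.

Lemma adx_D : adx Dmx = - x.
Proof.
apply/matrixP => r c; rewrite /commr -!mulmxE mul_diag_mx mul_mx_diag !mxE.
case: eqP => [<-|_]; last by rewrite mulr0 mul0r subrr oppr0.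
by rewrite mulr1 mul1r -natr1 opprD addrA subrr sub0r.
Qed.

Lemma adx_B i : adx (Bmx k n i) = - x ^+ i.+1.
Proof.
have xpowC : x ^+ i * x = x * x ^+ i by rewrite -exprSr exprS.
rewrite Bmx_diag /commr -mulrA xpowC !mulrA -mulrBl.
by rewrite -[Dmx * x - x * Dmx]/(adx Dmx) adx_D mulNr exprS.
Qed.

(* When n = 0 in k, the diagonal of ad C is (-1, ..., -1, n - 1) = -1. *)
Lemma adx_C : n%:R = 0 :> k -> adx (Cmx k n) = -1.
Proof.
move=> n0; apply/matrixP => r c; rewrite commrE mulxE xmulE !mxE.
have -> : (if (0 < c)%N then if r == (inord c.-1 : 'I_n).+1 :> nat then r%:R else 0 else 0)
          = if r == c then r%:R else 0 :> k.
  case: (posnP c) => [c0|c_gt0]; first by case: eqP => [->|_]; rewrite ?c0.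
  by rewrite inordK ?prednK //; have := ltn_ord c; lia.
have -> : (if (r.+1 < n)%N then
             if (inord r.+1 : 'I_n) == c.+1 :> nat then (inord r.+1 : 'I_n)%:R else 0
           else 0) = if (r == c) && (r.+1 < n)%N then r.+1%:R else 0 :> k.
  by case: ltnP => lt_rn; rewrite ?andbT ?andbF // inordK.
case: eqP => _ /=; last by rewrite subrr oppr0.
case: ltnP => [_ | le_nr]; first by rewrite -natr1 opprD addrA subrr sub0r.
have -> : r = m :> nat by have := ltn_ord r; lia.
by rewrite subr0; apply/eqP; rewrite -addr_eq0 natr1 n0.
Qed.

Lemma Jspace_sub_Nfamily b : (Jspace <= <<Nfamily k n b>>)%VS.
Proof. by apply: sub_span => v; rewrite /Nfamily mem_cat => ->. Qed.

Lemma Bmx_in_Nfamily b i : (i < m)%N -> Bmx k n i \in <<Nfamily k n b>>%VS.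
Proof.
move=> lt_im; apply: memv_span; rewrite /Nfamily !mem_cat map_f ?orbT //.
by rewrite mem_iota subn1.
Qed.

Lemma Cmx_in_Nfamily : Cmx k n \in <<Nfamily k n true>>%VS.
Proof. by apply: memv_span; rewrite /Nfamily !mem_cat mem_seq1 eqxx !orbT. Qed.

Lemma Nfamily_adx_in (b : bool) z :
  (b -> n%:R = 0 :> k) -> z \in <<Nfamily k n b>>%VS -> adx z \in Jspace.
Proof.
move=> hb; apply: span_linear_into => v; rewrite /Nfamily !mem_cat.
case/or3P => [/mapP [i _ ->] | /mapP [i _ ->] |].
- by rewrite /= /Amx adx_xpow mem0v.
- by rewrite /= adx_B memvN xpow_in.
case: b hb => [/(_ isT) n0 | _]; rewrite ?in_nil // mem_seq1 => /eqP ->.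
by rewrite /= adx_C // memvN -(expr0 x) xpow_in.
Qed.

Lemma adx_cancel z (c : 'I_n -> k) : adx z = \sum_(i < n) c i *: x ^+ i ->
  adx (z + \sum_(i < m) c (lift ord0 i) *: Bmx k n i) = c ord0 *: 1.
Proof.
move=> adz; rewrite linearD linear_sum /= adz big_ord_recl expr0.
under [X in _ + X]eq_bigr do rewrite linearZ /= adx_B scalerN.
by rewrite sumrN addrK.
Qed.

Lemma Nfamily_of_adx (b : bool) z :
  (n%:R = 0 :> k -> b) -> adx z \in Jspace -> z \in <<Nfamily k n b>>%VS.
Proof.
move=> hb /Jspace_coord [c /adx_cancel adzS].
set S := \sum_(i < m) c (lift ord0 i) *: Bmx k n i in adzS.
have S_in : S \in <<Nfamily k n b>>%VS.
  by apply: memv_suml => i _; apply/memvZ/Bmx_in_Nfamily.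
have J_in := subvP (Jspace_sub_Nfamily b).
rewrite -(addrK S z); apply: memvB S_in.
have [n0 | n_neq0] := eqVneq (n%:R : k) 0.
  have w_in : z + S + c ord0 *: Cmx k n \in Jspace.
    by apply: centralizer_x; rewrite linearD linearZ /= adzS adx_C // scalerN subrr.
  rewrite -(addrK (c ord0 *: Cmx k n) (z + S)); apply: memvB; first exact: J_in.
  by rewrite memvZ // (hb n0) Cmx_in_Nfamily.
have c0 : c ord0 = 0.
  have := commr_trace x (z + S); rewrite adzS mxtraceZ mxtrace1.
  by move/eqP; rewrite mulf_eq0 (negbTE n_neq0) orbF => /eqP.
by apply/J_in/centralizer_x; rewrite adzS c0 scale0r.
Qed.

Lemma normalizer_Nfamily (b : bool) z : (b <-> n%:R = 0 :> k) ->
  normalizer (@inJ k n) z <-> z \in <<Nfamily k n b>>%VS.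
Proof.
move=> [b_n0 n0_b]; rewrite normalizer_adx.
by split; [exact: Nfamily_of_adx | exact: Nfamily_adx_in].
Qed.

Lemma size_Nfamily b : size (Nfamily k n b) = (n + m + b)%N.
Proof. by rewrite !size_cat !size_map !size_iota subn1 addnA; case: b. Qed.

Lemma Nfamily_sum b (g : nat -> k) :
  \sum_(i < size (Nfamily k n b)) g i *: (Nfamily k n b)`_i =
  \sum_(i < n) g i *: x ^+ i + \sum_(i < m) g (n + i)%N *: Bmx k n i
  + (if b then g (n + m)%N *: Cmx k n else 0).
Proof.
rewrite sum_nth_cat size_map size_iota (sum_nth_cat _ _ (fun i => g (n + i)%N)).
rewrite !size_map !size_iota subSS subn0 addrA; congr (_ + _ + _).
- by apply: eq_bigr => i _; rewrite (nth_map 0%N) ?nth_iota ?size_iota.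
- by apply: eq_bigr => i _; rewrite (nth_map 0%N) ?nth_iota ?size_iota.
by case: b; rewrite ?big_ord1 ?big_ord0 ?addn0.
Qed.

(* From here on n >= 2, so that row 1 exists. *)
Hypothesis m_gt0 : (0 < m)%N.

(* Linear independence of the A_i, B_i and C, read off the entries in
   positions (0, i), (1, i + 1) and (1, 0). *)
Lemma Nfamily_relation (a b : nat -> k) (c : k) :
  \sum_(i < n) a i *: x ^+ i + \sum_(i < m) b i *: Bmx k n i + c *: Cmx k n = 0 ->
  [/\ forall i, (i < n)%N -> a i = 0, forall i, (i < m)%N -> b i = 0 & c = 0].
Proof.
have Bsum : \sum_(i < m) b i *: Bmx k n i = Dmx * \sum_(i < m) b i *: x ^+ i.
  by rewrite mulr_sumr; apply: eq_bigr => i _; rewrite Bmx_diag scalerAr.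
rewrite Bsum -mulmxE mul_diag_mx => rel0.
have entry (r c' : 'I_n) :
    (if (r <= c')%N then a (c' - r)%N else 0)
    + r%:R * (if (r <= c')%N && (c' - r < m)%N then b (c' - r)%N else 0)
    + c * (if r == c'.+1 :> nat then r%:R else 0) = 0.
  have := congr1 (fun M : 'M[k]_n => M r c') rel0.
  rewrite !mxE !psumE.
  by rewrite (_ : (c' - r < n)%N) ?andbT //; have := ltn_ord c'; lia.
have a0 i : (i < n)%N -> a i = 0.
  move=> lt_in; have := entry ord0 (inord i).
  by rewrite /= inordK // subn0 mul0r mulr0 !addr0.
split => // [i lt_im|].
  have := entry (inord 1) (inord i.+1); rewrite !inordK //= ?subSS ?subn0 ?a0 //; try lia.
  by rewrite add0r mulr0 addr0 mul1r lt_im.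
have := entry (inord 1) ord0; rewrite !inordK //=; try lia.
by rewrite mulr0 mulr1 !add0r.
Qed.

Lemma Nfamily_free b : free (Nfamily k n b).
Proof.
apply: free_nat_coefs => g; rewrite Nfamily_sum size_Nfamily.
have -> : (if b then g (n + m)%N *: Cmx k n else 0)
          = (if b then g (n + m)%N else 0) *: Cmx k n.
  by case: b; rewrite ?scale0r.
case/(Nfamily_relation g (fun i => g (n + i)%N)) => a0 b0 c0 i lt_i.
case: (ltnP i n) => [|le_ni]; first exact: a0.
case: (ltnP i (n + m)) => [lt_i_nm | le_nm_i].
  by rewrite -(subnKC le_ni) b0 //; lia.
suff -> : i = (n + m)%N by move: c0 lt_i; case: (b) => [-> // | _]; lia.
by move: lt_i; case: (b); lia.
Qed.

Lemma dim_Nfamily b : \dim <<Nfamily k n b>> = (n + m + b)%N.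
Proof. by rewrite (eqP (Nfamily_free b)) size_Nfamily. Qed.

End JordanNormalizer.

Theorem proposition4p21 (k : fieldType) (n : nat) (hn : (2 <= n)%N) :
  (~ char_dvd k n ->
     (forall z : 'M[k]_n, normalizer (@inJ k n) z <-> z \in <<Nfamily k n false>>%VS)
     /\ free (Nfamily k n false)
     /\ \dim <<Nfamily k n false>>%VS = (2 * n - 1)%N) /\
  (char_dvd k n ->
     (forall z : 'M[k]_n, normalizer (@inJ k n) z <-> z \in <<Nfamily k n true>>%VS)
     /\ free (Nfamily k n true)
     /\ \dim <<Nfamily k n true>>%VS = (2 * n)%N).
Proof.
case: n hn => [|[|m]] // _; have charE := char_dvdE k m.+2 isT.
split=> [ndvd | dvd]; (split; [move=> z | split]).
- by apply: normalizer_Nfamily; split=> // /charE.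
- exact: Nfamily_free.
- by rewrite dim_Nfamily //; lia.
- by apply: normalizer_Nfamily; split=> // _; apply/charE.
- exact: Nfamily_free.
- by rewrite dim_Nfamily //; lia.
Qed.
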